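(* For any basic categorized domain with $p\geq 2$, any strategy-proof, non-bossy, and category-wise neutral allocation mechanism is Pareto optimal.
   Context: Basic categorized domain: $n$ agents $\{1,\ldots,n\}$, $p$ categories $D_i=\{1,\ldots,n\}$ of indivisible items, bundles $\mathfrak D=D_1\times\cdots\times D_p$, $[\vec d]_i$ the $i$-th component. Each agent $j$ has a linear order $R_j$ over $\mathfrak D$; a profile is $P=(R_1,\ldots,R_n)$ and $(R_j',R_{-j})$ replaces $R_j$ by $R_j'$. An allocation is a map $A:\{1,\ldots,n\}\to\mathfrak D$ with $\{[A(1)]_i,\ldots,[A(n)]_i\}=D_i$ for each $i$. An allocation mechanism $f$ maps profiles to allocations; $f^j(P)$ is agent $j$'s bundle. Strategy-proofness: for all $P,j,R_j'$, $f^j(P)$ is ranked weakly above $f^j(R_j',R_{-j})$ in $R_j$. Non-bossiness: for all $P,j,R_j'$, if $f^j(P)=f^j(R_j',R_{-j})$ then $f(P)=f(R_j',R_{-j})$. Category-wise neutrality: for all $P$, categories $i$ and permutations $M_i$ of $D_i$, $f(M_i(P))=M_i(f(P))$, where $M_i(\vec d)=(M_i([\vec d]_i),[\vec d]_{-i})$ on bundles, extended to linear orders by relabeling bundles, to profiles componentwise, and to allocations by applying it to each agent's bundle. Pareto optimality: for every profile $P$ there is no allocation $A$ such that every agent $j$ ranks $A(j)$ weakly above $f^j(P)$ in $R_j$ and at least one agent ranks $A(j)$ strictly above $f^j(P)$. *)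

From mathcomp Require Import all_boot all_fingroup.
Set Implicit Arguments. Unset Strict Implicit. Unset Printing Implicit Defensive.

(* Agents are 'I_n, categories are 'I_p, items of each category D_i are 'I_n. *)
Definition bundle (n p : nat) := {ffun 'I_p -> 'I_n}.

(* A linear order over a finite type; [lo R a b] means "a is ranked weakly
   above b in R" (a R b). *)
Record linord (B : finType) := LinOrd {
  lo :> rel B;
  lo_refl : reflexive lo;
  lo_anti : antisymmetric lo;
  lo_trans : transitive lo;
  lo_total : total lo }.

Definition profile (n p : nat) := 'I_n -> linord (bundle n p).

Definition allocation (n p : nat) := {ffun 'I_n -> bundle n p}.

Definition is_allocation n p (A : allocation n p) : Prop :=
  forall i : 'I_p, [set A j i | j : 'I_n] = [set: 'I_n].

Definition is_mechanism n p (f : profile n p -> allocation n p) : Prop :=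
  forall P, is_allocation (f P).

Definition upd n p (P : profile n p) (j : 'I_n) (R' : linord (bundle n p))
  : profile n p := fun k => if k == j then R' else P k.

Definition strategy_proof n p (f : profile n p -> allocation n p) : Prop :=
  forall (P : profile n p) (j : 'I_n) (R' : linord (bundle n p)),
    P j (f P j) (f (upd P j R') j).

Definition non_bossy n p (f : profile n p -> allocation n p) : Prop :=
  forall (P : profile n p) (j : 'I_n) (R' : linord (bundle n p)),
    f P j = f (upd P j R') j -> f P = f (upd P j R').

Definition bmap n p (i : 'I_p) (M : {perm 'I_n}) (d : bundle n p) : bundle n p :=
  [ffun k => if k == i then M (d k) else d k].

Lemma bmapK n p (i : 'I_p) (M : {perm 'I_n}) :
  cancel (bmap i M) (bmap i M^-1).
Proof.
move=> d; apply/ffunP => k; rewrite !ffunE.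
by case: (k == i) => //; rewrite permK.
Qed.

Lemma bmapKV n p (i : 'I_p) (M : {perm 'I_n}) :
  cancel (bmap i M^-1) (bmap i M).
Proof.
move=> d; apply/ffunP => k; rewrite !ffunE.
by case: (k == i) => //; rewrite permKV.
Qed.

Definition rmap_rel n p (i : 'I_p) (M : {perm 'I_n}) (R : linord (bundle n p))
  : rel (bundle n p) := fun x y => R (bmap i M^-1 x) (bmap i M^-1 y).

Lemma rmap_refl n p i M (R : linord (bundle n p)) : reflexive (rmap_rel i M R).
Proof. by move=> x; apply: lo_refl. Qed.

Lemma rmap_anti n p i M (R : linord (bundle n p)) : antisymmetric (rmap_rel i M R).
Proof.
move=> x y H; have := lo_anti H => E.
by rewrite -(bmapKV i M x) E bmapKV.
Qed.

Lemma rmap_trans n p i M (R : linord (bundle n p)) : transitive (rmap_rel i M R).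
Proof. by move=> y x z; apply: lo_trans. Qed.

Lemma rmap_total n p i M (R : linord (bundle n p)) : total (rmap_rel i M R).
Proof. by move=> x y; apply: lo_total. Qed.

Definition rmap n p (i : 'I_p) (M : {perm 'I_n}) (R : linord (bundle n p))
  : linord (bundle n p) :=
  LinOrd (@rmap_refl n p i M R) (@rmap_anti n p i M R)
         (@rmap_trans n p i M R) (@rmap_total n p i M R).

Definition pmap n p (i : 'I_p) (M : {perm 'I_n}) (P : profile n p) : profile n p :=
  fun j => rmap i M (P j).

Definition amap n p (i : 'I_p) (M : {perm 'I_n}) (A : allocation n p)
  : allocation n p := [ffun j => bmap i M (A j)].

Definition category_wise_neutral n p (f : profile n p -> allocation n p) : Prop :=
  forall (P : profile n p) (i : 'I_p) (M : {perm 'I_n}),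
    f (pmap i M P) = amap i M (f P).

Definition pareto_optimal n p (f : profile n p -> allocation n p) : Prop :=
  forall P : profile n p,
    ~ exists A : allocation n p,
        [/\ is_allocation A,
            (forall j, P j (A j) (f P j)) &
            (exists j, P j (A j) (f P j) && (A j != f P j))].

(** Strategy-proofness and non-bossiness give Maskin monotonicity: if at
    [Q] each agent's bundle under [f P] still beats everything it beat at
    [P], then [f Q = f P].  Category-wise neutrality lets any allocation
    be reached by relabelling the items of each category, so [f] is onto.
    Now let [A] Pareto dominate [f P], realised as [f R], and let [Q] raise
    each agent's bundle in [A] to the top of his order.  Since [A k] is
    weakly above [f P k] for every agent [k], the passage from [P] to [Q] is
    monotone at [f P], so [f Q = f P]; and it is monotone at [f R = A], so
    [f Q = A].  Hence [A = f P]. *)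

From Pilot Require Import Defs.
From mathcomp Require Import all_boot all_fingroup.
From Stdlib Require Import FunctionalExtensionality.
Set Implicit Arguments. Unset Strict Implicit. Unset Printing Implicit Defensive.

Section Raise.
Variables (B : finType) (R : linord B) (a : B).

Definition raise_rel : rel B := fun x y => (x == a) || (y != a) && R x y.

Lemma raise_refl : reflexive raise_rel.
Proof. by move=> x; rewrite /raise_rel lo_refl andbT; case: (x == a). Qed.

Lemma raise_anti : antisymmetric raise_rel.
Proof.
move=> x y; rewrite /raise_rel.
by case: (eqVneq x a) => [->|_]; case: (eqVneq y a) => [->|_] //= /lo_anti.
Qed.

Lemma raise_trans : transitive raise_rel.
Proof.
move=> y x z; rewrite /raise_rel.
case: (eqVneq x a) => //= _; case: (eqVneq y a) => //= _.
by case: (z != a) => //=; apply: lo_trans.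
Qed.

Lemma raise_total : total raise_rel.
Proof.
move=> x y; rewrite /raise_rel.
by case: (eqVneq x a) => //= _; case: (eqVneq y a) => //= _; apply: lo_total.
Qed.

Definition raise : linord B :=
  LinOrd raise_refl raise_anti raise_trans raise_total.

Lemma raise_top y : raise a y.
Proof. by rewrite /= /raise_rel eqxx. Qed.

Lemma raise_lower_contour x y : R a x -> R x y -> raise x y.
Proof.
rewrite /= /raise_rel => Rax Rxy.
case: (eqVneq y a) => [ya|_]; last by rewrite Rxy orbT.
by rewrite (@lo_anti _ R x a) ?eqxx // Rax -ya Rxy.
Qed.

End Raise.

Definition maskin_monotonic n p (f : profile n p -> allocation n p) : Prop :=
  forall P Q : profile n p,
    (forall k y, P k (f P k) y -> Q k (f P k) y) -> f Q = f P.

Lemma updK n p (P : profile n p) k R : upd (upd P k R) k (P k) = P.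
Proof.
by apply: functional_extensionality => j; rewrite /upd; case: (eqVneq j k) => [->|].
Qed.

Section MaskinMonotonicity.
Variables (n p : nat) (f : profile n p -> allocation n p).
Hypotheses (SP : strategy_proof f) (NB : non_bossy f).

Lemma sp_nb_upd_monotonic (P : profile n p) k (R : linord (bundle n p)) :
  (forall y, P k (f P k) y -> R (f P k) y) -> f (upd P k R) = f P.
Proof.
move=> PR; have truthful := SP P k R.
have untruthful := SP (upd P k R) k (P k).
rewrite updK /upd eqxx in untruthful.
have same_bundle : f (upd P k R) k = f P k.
  by apply: (@lo_anti _ R); rewrite untruthful PR.
by symmetry; apply: NB; rewrite same_bundle.
Qed.

Lemma sp_nb_maskin_monotonic : maskin_monotonic f.
Proof.
move=> P Q PQ.
pose mix (s : seq 'I_n) : profile n p := fun k => if k \in s then Q k else P k.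
suff mixE s : uniq s -> f (mix s) = f P.
  rewrite -(mixE _ (enum_uniq 'I_n)); congr f.
  by apply: functional_extensionality => k; rewrite /mix mem_enum.
elim: s => [|k s IH] /= => [_|/andP [ks us]].
  by congr f; apply: functional_extensionality.
have -> : mix (k :: s) = upd (mix s) k (Q k).
  apply: functional_extensionality => j; rewrite /mix /upd inE.
  by case: (eqVneq j k) => [->|].
rewrite sp_nb_upd_monotonic IH // => y.
by rewrite /mix (negbTE ks); apply: PQ.
Qed.

End MaskinMonotonicity.

Lemma allocation_column_inj n p (A : allocation n p) i :
  is_allocation A -> injective (fun j => A j i).
Proof.
move=> /(_ i) onto; have /imset_injP inj : #|[set A j i | j : 'I_n]| == #|'I_n|.
  by rewrite onto cardsT.
by move=> j1 j2; apply: inj.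
Qed.

Lemma allocation_relabel n p (A B : allocation n p) i :
  is_allocation A -> is_allocation B ->
  exists M : {perm 'I_n}, forall j, M (B j i) = A j i.
Proof.
move=> /(@allocation_column_inj _ _ _ i) injA /(@allocation_column_inj _ _ _ i) injB.
by exists ((perm injB)^-1 * perm injA)%g => j; rewrite permM -{1}(permE injB) permK permE.
Qed.

Section Relabelling.
Variables (n p : nat) (M : 'I_p -> {perm 'I_n}).

Definition pmap_seq (s : seq 'I_p) (P : profile n p) : profile n p :=
  foldr (fun i Q => Defs.pmap i (M i) Q) P s.

Definition amap_seq (s : seq 'I_p) (A : allocation n p) : allocation n p :=
  foldr (fun i B => amap i (M i) B) A s.

Lemma neutral_pmap_seq (f : profile n p -> allocation n p) s P :
  category_wise_neutral f -> f (pmap_seq s P) = amap_seq s (f P).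
Proof. by move=> CN; elim: s => //= i s IH; rewrite CN IH. Qed.

Lemma amap_seqE s A j k :
  uniq s -> amap_seq s A j k = if k \in s then M k (A j k) else A j k.
Proof.
elim: s => //= i s IH /andP [i_s us]; rewrite !ffunE IH // inE.
by case: (eqVneq k i) => [->|]; rewrite ?(negbTE i_s).
Qed.

End Relabelling.

Lemma neutral_mechanism_onto n p (f : profile n p -> allocation n p) :
  is_mechanism f -> category_wise_neutral f ->
  forall (P : profile n p) (A : allocation n p), is_allocation A ->
  exists R, f R = A.
Proof.
move=> mech CN P A allocA.
have [M relabel] := fin_all_exists (fun i => allocation_relabel i allocA (mech P)).
exists (pmap_seq M (enum 'I_p) P); rewrite neutral_pmap_seq //.
apply/ffunP => j; apply/ffunP => k.
by rewrite amap_seqE ?enum_uniq // mem_enum relabel.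
Qed.

Theorem lemma3 (n p : nat) (f : profile n p -> allocation n p) :
  2 <= p ->
  is_mechanism f ->
  strategy_proof f ->
  non_bossy f ->
  category_wise_neutral f ->
  pareto_optimal f.
Proof.
move=> _ mech SP NB CN P [A [allocA dominates [j /andP [_ Aj_new]]]].
have MM := sp_nb_maskin_monotonic SP NB.
pose Q k := raise (P k) (A k).
have fQ_fP : f Q = f P.
  by apply: MM => k y; apply: raise_lower_contour (dominates k).
have [R fR] := neutral_mechanism_onto mech CN P allocA.
have fQ_A : f Q = A.
  by rewrite -fR; apply: MM => k y _; rewrite fR; apply: raise_top.
by move: Aj_new; rewrite -fQ_fP fQ_A eqxx.
Qed.
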